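(* Let $d\ge1$, $\sigma>0$, $\bar\gamma>0$, $\gamma\in(0,\bar\gamma]$, and let $T_\gamma,\tilde T_\gamma:\mathbb{R}^d\to\mathbb{R}^d$ be measurable. Assume there is a non-decreasing $\tau_\gamma:[0,\infty)\to[0,\infty)$ with $\|T_\gamma(x)-T_\gamma(\tilde x)\|\le\tau_\gamma(\|x-\tilde x\|)$ for all $x,\tilde x\in\mathbb{R}^d$, and that there is $c_\infty>0$ with $\sup_x\|T_\gamma(x)-\tilde T_\gamma(x)\|\le\gamma c_\infty$. Let $(Z_k)_{k\ge1}$ be i.i.d. standard Gaussian on $\mathbb{R}^d$, $(U_k)_{k\ge1}$ i.i.d. uniform on $[0,1]$, independent of each other and of an initial pair $(X_0,\tilde X_0)$, and define for $k\in\mathbb{N}$ $$X_{k+1}=T_\gamma(X_k)+(\sigma^2\gamma)^{1/2}Z_{k+1},\qquad \tilde X_{k+1}=B_{k+1}X_{k+1}+(1-B_{k+1})F_\gamma(X_k,\tilde X_k,Z_{k+1}),$$ where $B_{k+1}=\mathbb{1}_{[0,\infty)}(p_\gamma(X_k,\tilde X_k,Z_{k+1})-U_{k+1})$, and, with $E(x,\tilde x)=\tilde T_\gamma(\tilde x)-T_\gamma(x)$, $e(x,\tilde x)=E(x,\tilde x)/\|E(x,\tilde x)\|$ if $E(x,\tilde x)\neq0$ and $e(x,\tilde x)=e_0$ (a fixed unit vector) otherwise, $$F_\gamma(x,\tilde x,z)=\tilde T_\gamma(\tilde x)+(\sigma^2\gamma)^{1/2}\{\mathrm{Id}-2e(x,\tilde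 x)e(x,\tilde x)^\top\}z,\quad p_\gamma(x,\tilde x,z)=1\wedge\frac{\varphi_{\sigma^2\gamma}\{\|E(x,\tilde x)\|-(\sigma^2\gamma)^{1/2}\langle e(x,\tilde x),z\rangle\}}{\varphi_{\sigma^2\gamma}\{(\sigma^2\gamma)^{1/2}\langle e(x,\tilde x),z\rangle\}}.$$ Let $G_k=\langle e(X_{k-1},\tilde X_{k-1}),Z_k\rangle$, and for $a\ge0$, $g\in\mathbb{R}$, $u\in[0,1]$ set $\bar p_{\sigma^2\gamma}(a,g)=1\wedge\frac{\varphi_{\sigma^2\gamma}(a-(\sigma^2\gamma)^{1/2}g)}{\varphi_{\sigma^2\gamma}((\sigma^2\gamma)^{1/2}g)}$, $\mathcal H_\gamma(a,g,u)=\mathbb{1}_{[0,\infty)}(u-\bar p_{\sigma^2\gamma}(a,g))(a-2(\sigma^2\gamma)^{1/2}g)$ and $\mathcal G_\gamma(w,g,u)=\mathcal H_\gamma(\tau_\gamma(w)+\gamma c_\infty,g,u)$ for $w\ge0$. Then for every $k\in\mathbb{N}$, almost surely, $$\|X_{k+1}-\tilde X_{k+1}\|\le\mathcal G_\gamma(\|X_k-\tilde X_k\|,G_{k+1},U_{k+1}).$$ Moreover, for any $g\in\mathbb{R}$ and $u\in[0,1]$, $w\mapsto\mathcal G_\gamma(w,g,u)$ is non-decreasing on $[0,\infty)$.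
   Context: $\varphi_{s}(t)=(2\pi s)^{-1/2}e^{-t^2/(2s)}$ denotes the centered one-dimensional Gaussian density with variance $s>0$. *)

From HB Require Import structures.
From mathcomp Require Import all_boot all_order all_algebra.
From mathcomp Require Import all_classical all_reals all_analysis.
Set Implicit Arguments. Unset Strict Implicit. Unset Printing Implicit Defensive.
Import Order.TTheory GRing.Theory Num.Theory.
Local Open Scope classical_set_scope.
Local Open Scope ring_scope.

(* R^d is represented by d.-tuple R, which carries the product (= Borel)
   sigma-algebra from MathComp-Analysis (measure_tuple_display). *)
Section vectors.
Context {R : realType} {d : nat}.
Definition vadd (x y : d.-tuple R) : d.-tuple R := [tuple tnth x i + tnth y i | i < d].
Definition vsub (x y : d.-tuple R) : d.-tuple R := [tuple tnth x i - tnth y i | i < d].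
Definition vscale (a : R) (x : d.-tuple R) : d.-tuple R := [tuple a * tnth x i | i < d].
Definition vdot (x y : d.-tuple R) : R := \sum_(i < d) tnth x i * tnth y i.
Definition vnorm (x : d.-tuple R) : R := Num.sqrt (vdot x x).
End vectors.

Definition phi {R : realType} (s t : R) : R :=
  (Num.sqrt (2 * pi * s))^-1 * expR (- t ^+ 2 / (2 * s)).

Definition ind0 {R : realType} (t : R) : R := if 0 <= t then 1 else 0.

Section coupling.
Context {R : realType} {d : nat}.
Variables (T Tt : d.-tuple R -> d.-tuple R) (e0 : d.-tuple R) (sigma gamma : R).
Local Notation s := (Num.sqrt (sigma ^+ 2 * gamma)).

Definition Ediff (x xt : d.-tuple R) : d.-tuple R := vsub (Tt xt) (T x).
Definition edir (x xt : d.-tuple R) : d.-tuple R :=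
  if Ediff x xt != [tuple 0 | _ < d] then vscale (vnorm (Ediff x xt))^-1 (Ediff x xt)
  else e0.
Definition Fgam (x xt z : d.-tuple R) : d.-tuple R :=
  vadd (Tt xt) (vscale s (vsub z (vscale (2 * vdot (edir x xt) z) (edir x xt)))).
Definition pgam (x xt z : d.-tuple R) : R :=
  Num.min 1 (phi (sigma ^+ 2 * gamma) (vnorm (Ediff x xt) - s * vdot (edir x xt) z)
             / phi (sigma ^+ 2 * gamma) (s * vdot (edir x xt) z)).
End coupling.

Section Gfun.
Context {R : realType}.
Variables (sigma gamma : R) (tau : R -> R) (cinf : R).
Local Notation s := (Num.sqrt (sigma ^+ 2 * gamma)).
Definition pbar (a g : R) : R :=
  Num.min 1 (phi (sigma ^+ 2 * gamma) (a - s * g) / phi (sigma ^+ 2 * gamma) (s * g)).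
Definition Hgam (a g u : R) : R := ind0 (u - pbar a g) * (a - 2 * s * g).
Definition Ggam (w g u : R) : R := Hgam (tau w + gamma * cinf) g u.
End Gfun.

Definition sigma_of {d} {Om : Type} {T : measurableType d} (f : Om -> T) : set (set Om) :=
  preimage_set_system setT f measurable.

Definition mutually_independent {dO} {Om : measurableType dO} {R : realType}
  (P : probability Om R) {I : eqType} (F : I -> set (set Om)) : Prop :=
  forall (J : seq I) (A : I -> set Om), uniq J ->
    (forall j, j \in J -> F j (A j)) ->
    P (\bigcap_(j in [set j | j \in J]) A j) = (\prod_(j <- J) P (A j))%E.

Definition has_law {dO} {Om : measurableType dO} {R : realType}
  (P : probability Om R) (f : Om -> R) (mu : set R -> \bar R) : Prop :=
  forall A : set R, measurable A -> P (f @^-1` A) = mu A.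

Definition std_gaussian_vec {dO} {Om : measurableType dO} {R : realType} {d : nat}
  (P : probability Om R) (Z : Om -> d.-tuple R) : Prop :=
  measurable_fun setT Z /\
  mutually_independent P (fun i : 'I_d => sigma_of (fun w => tnth (Z w) i)) /\
  forall i : 'I_d, has_law P (fun w => tnth (Z w) i) (normal_prob 0 1).

Definition uniform01 {dO} {Om : measurableType dO} {R : realType}
  (P : probability Om R) (U : Om -> R) : Prop :=
  measurable_fun setT U /\
  has_law P U (fun A => lebesgue_measure (A `&` `[0, 1]%classic)).

From HB Require Import structures.
From mathcomp Require Import all_boot all_order all_algebra.
From mathcomp Require Import all_classical all_reals all_analysis.
From mathcomp Require Import ring lra.
Import Order.TTheory GRing.Theory Num.Theory.
Local Open Scope classical_set_scope.
Local Open Scope ring_scope.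

(* On acceptance Xt_{k+1} = X_{k+1}.  On rejection the noise is reflected
   across the hyperplane orthogonal to e = E / |E|, so that
   X_{k+1} - Xt_{k+1} = (2 s g - |E|) e with s^2 = sigma^2 gamma and
   g = <e, Z_{k+1}>.  Rejection means pbar(|E|, g) < U <= 1, and
   pbar(|E|, g) < 1 forces |E| - 2 s g > 0, so the distance is at most
   H(|E|, g, U) whenever U < 1, which holds almost surely.  Finally
   pbar(a, g) = min(1, exp(- a (a - 2 s g) / (2 s^2))) is non-increasing in a
   where a - 2 s g > 0, which makes H non-decreasing in a, and
   |E| <= tau(|x - xt|) + gamma cinf by the triangle inequality. *)

Section vectors.
Context {R : realType} {d : nat}.
Implicit Types (a : R) (x y z : d.-tuple R).

Local Notation vzero := [tuple (0 : R) | _ < d].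

Lemma tnth_vadd x y i : tnth (vadd x y) i = tnth x i + tnth y i.
Proof. by rewrite tnth_mktuple. Qed.

Lemma tnth_vsub x y i : tnth (vsub x y) i = tnth x i - tnth y i.
Proof. by rewrite tnth_mktuple. Qed.

Lemma tnth_vscale a x i : tnth (vscale a x) i = a * tnth x i.
Proof. by rewrite tnth_mktuple. Qed.

Lemma vdotC x y : vdot x y = vdot y x.
Proof. by apply: eq_bigr => i _; rewrite mulrC. Qed.

Lemma vdotZl a x y : vdot (vscale a x) y = a * vdot x y.
Proof. by rewrite /vdot mulr_sumr; apply: eq_bigr => i _; rewrite tnth_vscale mulrA. Qed.

Lemma vdotZr a x y : vdot x (vscale a y) = a * vdot x y.
Proof. by rewrite vdotC vdotZl vdotC. Qed.

Lemma vdotDl x y z : vdot (vadd x y) z = vdot x z + vdot y z.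
Proof. by rewrite /vdot -big_split; apply: eq_bigr => i _; rewrite tnth_vadd mulrDl. Qed.

Lemma vdotDr x y z : vdot z (vadd x y) = vdot z x + vdot z y.
Proof. by rewrite vdotC vdotDl vdotC (vdotC y). Qed.

Lemma vdotBl x y z : vdot (vsub x y) z = vdot x z - vdot y z.
Proof. by rewrite /vdot -sumrB; apply: eq_bigr => i _; rewrite tnth_vsub mulrBl. Qed.

Lemma vdotBr x y z : vdot z (vsub x y) = vdot z x - vdot z y.
Proof. by rewrite vdotC vdotBl vdotC (vdotC y). Qed.

Lemma vdot0r x : vdot x vzero = 0.
Proof. by rewrite /vdot big1 // => i _; rewrite tnth_mktuple mulr0. Qed.

Lemma vdot_ge0 x : 0 <= vdot x x.
Proof. by apply: sumr_ge0 => i _; rewrite -expr2 sqr_ge0. Qed.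

Lemma vdot_eq0 x : (vdot x x == 0) = (x == vzero).
Proof.
apply/eqP/eqP => [x0|->]; last exact: vdot0r.
apply: eq_from_tnth => i; rewrite tnth_mktuple.
apply/eqP; rewrite -sqrf_eq0 expr2; apply/eqP.
by apply: (psumr_eq0P _ x0) => // j _; rewrite -expr2 sqr_ge0.
Qed.

Lemma vnorm_ge0 x : 0 <= vnorm x.
Proof. exact: sqrtr_ge0. Qed.

Lemma vnorm_sqr x : vnorm x ^+ 2 = vdot x x.
Proof. by rewrite sqr_sqrtr // vdot_ge0. Qed.

Lemma vnorm_eq0 x : (vnorm x == 0) = (x == vzero).
Proof. by rewrite sqrtr_eq0 -vdot_eq0 eq_le vdot_ge0 andbT. Qed.

Lemma vnormZ a x : vnorm (vscale a x) = `|a| * vnorm x.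
Proof. by rewrite /vnorm vdotZl vdotZr mulrA -expr2 sqrtrM ?sqr_ge0 // sqrtr_sqr. Qed.

Lemma vdot_le_vnorm x y : vdot x y <= vnorm x * vnorm y.
Proof.
set X := vdot x x; set Y := vdot y y; set D := vdot x y.
have sqrD_le : D ^+ 2 <= X * Y.
  have [/eqP|Y_neq0] := eqVneq Y 0.
    by rewrite vdot_eq0 /D => /eqP->; rewrite vdot0r expr0n mulr_ge0 ?vdot_ge0.
  have Y_gt0 : 0 < Y by rewrite lt0r Y_neq0 vdot_ge0.
  (* expand |Y x - D y|^2 = Y (X Y - D^2) >= 0 *)
  have := vdot_ge0 (vsub (vscale Y x) (vscale D y)).
  rewrite !vdotBl !vdotBr !vdotZl !vdotZr -/X -/Y -/D (vdotC y x) -/D.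
  have -> : Y * (Y * X) - Y * (D * D) - (D * (Y * D) - D * (D * Y)) =
            Y * (X * Y - D ^+ 2) by ring.
  by rewrite pmulr_rge0 // subr_ge0.
have [D_le0|D_gt0] := lerP D 0.
  by apply: le_trans D_le0 _; rewrite mulr_ge0 ?vnorm_ge0.
by rewrite -sqrtrM ?vdot_ge0 // -(ger0_norm (ltW D_gt0)) -sqrtr_sqr ler_sqrt ?mulr_ge0 ?vdot_ge0.
Qed.

Lemma vnormD_le x y : vnorm (vadd x y) <= vnorm x + vnorm y.
Proof.
have nxy_ge0 : 0 <= vnorm x + vnorm y by rewrite addr_ge0 ?vnorm_ge0.
rewrite -(ger0_norm nxy_ge0) -sqrtr_sqr ler_sqrt ?sqr_ge0 //.
rewrite !vdotDl !vdotDr (vdotC y x) -!vnorm_sqr.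
by have := vdot_le_vnorm x y; nra.
Qed.

Lemma vdist_triangle x y z : vnorm (vsub x z) <= vnorm (vsub x y) + vnorm (vsub y z).
Proof.
have -> : vsub x z = vadd (vsub x y) (vsub y z).
  by apply: eq_from_tnth => i; rewrite tnth_vadd !tnth_vsub addrA subrK.
exact: vnormD_le.
Qed.

Lemma vdistC x y : vnorm (vsub x y) = vnorm (vsub y x).
Proof.
have -> : vsub x y = vscale (-1) (vsub y x).
  by apply: eq_from_tnth => i; rewrite tnth_vscale !tnth_vsub mulN1r opprB.
by rewrite vnormZ normrN normr1 mul1r.
Qed.

Lemma vdist_vv x : vnorm (vsub x x) = 0.
Proof.
apply/eqP; rewrite vnorm_eq0; apply/eqP/eq_from_tnth => i.
by rewrite tnth_vsub tnth_mktuple subrr.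
Qed.

Lemma vadd_ind0 t x y :
  vadd (vscale (ind0 t) x) (vscale (1 - ind0 t) y) = if 0 <= t then x else y.
Proof.
by apply: eq_from_tnth => i; rewrite /ind0; case: ifP => _;
  rewrite tnth_vadd !tnth_vscale ?subrr ?subr0 ?mul1r ?mul0r ?addr0 ?add0r.
Qed.

End vectors.

Lemma phi_ratio {R : realType} (v t1 t2 : R) : 0 < v ->
  phi v t1 / phi v t2 = expR ((t2 ^+ 2 - t1 ^+ 2) / (2 * v)).
Proof.
move=> v_gt0; rewrite /phi [(_ * expR _)^-1]invfM mulrACA mulfV ?mul1r; last first.
  by rewrite invr_eq0 sqrtr_eq0 -ltNge !mulr_gt0 ?pi_gt0.
by rewrite -expRN -expRD -mulrBl opprK addrC.
Qed.

Lemma ind0_ge0 {R : realType} (t : R) : 0 <= ind0 t.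
Proof. by rewrite /ind0; case: ifP. Qed.

Lemma ind0_le {R : realType} (t1 t2 : R) : t1 <= t2 -> ind0 t1 <= ind0 t2.
Proof.
rewrite /ind0 => t12; case: ifP => [t1_ge0|_]; last by case: ifP.
by rewrite (le_trans t1_ge0 t12).
Qed.

Section acceptance.
Context {R : realType} {sigma gamma : R}.
Hypothesis S_gt0 : 0 < sigma ^+ 2 * gamma.
Local Notation S := (sigma ^+ 2 * gamma).
Local Notation s := (Num.sqrt (sigma ^+ 2 * gamma)).
Implicit Types a g u : R.

Lemma pbarE a g :
  pbar sigma gamma a g = Num.min 1 (expR (- (a * (a - 2 * s * g)) / (2 * S))).
Proof.
by rewrite /pbar phi_ratio // (_ : _ ^+ 2 - _ = - (a * (a - 2 * s * g))); last by ring.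
Qed.

Lemma pbar_le1 a g : pbar sigma gamma a g <= 1.
Proof. by rewrite ge_min lexx. Qed.

Lemma pbar_eq1 a g : a * (a - 2 * s * g) <= 0 -> pbar sigma gamma a g = 1.
Proof.
move=> aq_le0; rewrite pbarE min_l // -[leLHS]expR0 ler_expR.
by rewrite divr_ge0 ?oppr_ge0 // mulr_ge0 // ltW.
Qed.

Lemma pbar_lt1_gap a g : 0 <= a -> pbar sigma gamma a g < 1 -> 0 < a - 2 * s * g.
Proof.
move=> a_ge0; apply: contraLR; rewrite -!leNgt => gap_le0.
by rewrite pbar_eq1 // mulr_ge0_le0.
Qed.

Lemma pbar_le a a' g : a * (a - 2 * s * g) <= a' * (a' - 2 * s * g) ->
  pbar sigma gamma a' g <= pbar sigma gamma a g.
Proof.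
move=> aq_le; rewrite !pbarE le_min ge_min lexx /= ge_min ler_expR.
by rewrite !mulNr lerN2 ler_wpM2r ?orbT // invr_ge0 mulr_ge0 // ltW.
Qed.

Lemma Hgam_ge0 a g u : 0 <= a -> u < 1 -> 0 <= Hgam sigma gamma a g u.
Proof.
move=> a_ge0 u_lt1; rewrite /Hgam.
have [gap_ge0|gap_lt0] := lerP 0 (a - 2 * s * g); first by rewrite mulr_ge0 ?ind0_ge0.
rewrite pbar_eq1; last exact: mulr_ge0_le0 a_ge0 (ltW gap_lt0).
by rewrite /ind0 subr_ge0 (lt_geF u_lt1) mul0r.
Qed.

Lemma Hgam1 a g : Hgam sigma gamma a g 1 = a - 2 * s * g.
Proof. by rewrite /Hgam /ind0 subr_ge0 pbar_le1 mul1r. Qed.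

Lemma Hgam_le a1 a2 g u : 0 <= a1 -> a1 <= a2 -> u <= 1 ->
  Hgam sigma gamma a1 g u <= Hgam sigma gamma a2 g u.
Proof.
move=> a1_ge0 a12 u_le1.
have [u_lt1|u_ge1] := ltrP u 1; last first.
  have -> : u = 1 by apply/eqP; rewrite eq_le u_le1.
  by rewrite !Hgam1 lerD2r.
have [gap_le0|gap_gt0] := lerP (a1 - 2 * s * g) 0.
  rewrite /Hgam pbar_eq1; last exact: mulr_ge0_le0 a1_ge0 gap_le0.
  rewrite /ind0 subr_ge0 (lt_geF u_lt1) mul0r.
  exact: Hgam_ge0 (le_trans a1_ge0 a12) u_lt1.
have gap12 : a1 - 2 * s * g <= a2 - 2 * s * g by rewrite lerD2r.
have a12q := ler_pM a1_ge0 (ltW gap_gt0) a12 gap12.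
rewrite /Hgam; apply: ler_pM (ind0_ge0 _) (ltW gap_gt0) _ gap12.
by rewrite ind0_le // lerD2l lerN2 pbar_le.
Qed.

End acceptance.

Section coupling_step.
Context {R : realType} {d : nat}
  {T Tt : d.-tuple R -> d.-tuple R} {e0 : d.-tuple R} {sigma gamma : R}.
Hypotheses (S_gt0 : 0 < sigma ^+ 2 * gamma) (e0_unit : vnorm e0 = 1).
Local Notation s := (Num.sqrt (sigma ^+ 2 * gamma)).
Local Notation E := (Ediff T Tt).
Local Notation e := (edir T Tt e0).
Implicit Types x xt z : d.-tuple R.

Lemma vnorm_edir x xt : vnorm (e x xt) = 1.
Proof.
rewrite /edir; case: ifPn => // E_neq0.
have nE_gt0 : 0 < vnorm (E x xt) by rewrite lt0r vnorm_eq0 E_neq0 vnorm_ge0.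
by rewrite vnormZ gtr0_norm ?invr_gt0 // mulVf ?gt_eqF.
Qed.

Lemma Ediff_edir x xt : E x xt = vscale (vnorm (E x xt)) (e x xt).
Proof.
rewrite /edir; case: ifPn => [E_neq0|/negPn/eqP E0].
  have nE_neq0 : vnorm (E x xt) != 0 by rewrite vnorm_eq0.
  by apply: eq_from_tnth => i; rewrite !tnth_vscale mulrA mulfV ?mul1r.
have /eqP-> : vnorm (E x xt) == 0 by rewrite vnorm_eq0 E0.
rewrite E0.
by apply: eq_from_tnth => i; rewrite tnth_vscale !tnth_mktuple mul0r.
Qed.

Lemma vsub_Fgam x xt z :
  vsub (vadd (T x) (vscale s z)) (Fgam T Tt e0 sigma gamma x xt z) =
  vscale (2 * s * vdot (e x xt) z - vnorm (E x xt)) (e x xt).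
Proof.
apply: eq_from_tnth => i; have := congr1 (fun v => tnth v i) (Ediff_edir x xt).
rewrite /Fgam !(tnth_vsub, tnth_vadd, tnth_vscale) => Ei.
have -> : tnth (Tt xt) i = vnorm (E x xt) * tnth (e x xt) i + tnth (T x) i.
  by rewrite -Ei subrK.
ring.
Qed.

Lemma coupling_dist_le_Hgam x xt z u : u < 1 ->
  let B := ind0 (pgam T Tt e0 sigma gamma x xt z - u) in
  vnorm (vsub (vadd (T x) (vscale s z))
    (vadd (vscale B (vadd (T x) (vscale s z)))
          (vscale (1 - B) (Fgam T Tt e0 sigma gamma x xt z))))
  <= Hgam sigma gamma (vnorm (E x xt)) (vdot (e x xt) z) u.
Proof.
move=> u_lt1 /=; rewrite vadd_ind0.
have nE_ge0 := vnorm_ge0 (E x xt).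
case: ifPn => [_|]; first by rewrite vdist_vv Hgam_ge0.
rewrite subr_ge0 -ltNge => rejected.
have gap_gt0 := pbar_lt1_gap S_gt0 _ _ nE_ge0 (lt_trans rejected u_lt1).
rewrite vsub_Fgam vnormZ vnorm_edir mulr1 distrC (ger0_norm (ltW gap_gt0)).
by rewrite /Hgam /ind0 subr_ge0 (ltW rejected) mul1r.
Qed.

Lemma vnorm_Ediff_le (tau : R -> R) (c : R) :
  (forall x xt, vnorm (vsub (T x) (T xt)) <= tau (vnorm (vsub x xt))) ->
  (forall x, vnorm (vsub (T x) (Tt x)) <= c) ->
  forall x xt, vnorm (E x xt) <= tau (vnorm (vsub x xt)) + c.
Proof.
move=> T_lip T_Tt x xt; rewrite addrC.
apply: le_trans (vdist_triangle _ (T xt) _) _.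
by rewrite lerD // vdistC.
Qed.

End coupling_step.

Lemma uniform01_lt1 {dO} {Om : measurableType dO} {R : realType}
    {P : probability Om R} {U : Om -> R} :
  uniform01 P U -> {ae P, forall w, U w < 1}.
Proof.
move=> [mU lawU]; exists (U @^-1` `[1, +oo[%classic); split.
- by rewrite -[_ @^-1` _]setTI; apply: mU => //; exact: measurable_itv.
- rewrite lawU; last exact: measurable_itv.
  have -> : `[1, +oo[%classic `&` `[0, 1]%classic = [set (1 : R)].
    apply/seteqP; split => t /=; rewrite !in_itv /= ?andbT.
      by move=> [t_ge1 /andP[_ t_le1]]; apply/eqP; rewrite eq_le t_le1 t_ge1.
    by move=> ->; rewrite lexx ler01.
  exact: lebesgue_measure_set1.
- by move=> w /= /negP; rewrite in_itv /= andbT -leNgt.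
Qed.

Theorem proposition6 (R : realType) (d : nat) (hd : (0 < d)%N)
  (sigma gammabar gamma cinf : R) (hsigma : 0 < sigma) (hgb : 0 < gammabar)
  (hg0 : 0 < gamma) (hg1 : gamma <= gammabar)
  (T Tt : d.-tuple R -> d.-tuple R)
  (mT : measurable_fun setT T) (mTt : measurable_fun setT Tt)
  (tau : R -> R)
  (htau0 : forall w, 0 <= w -> 0 <= tau w)
  (htaumono : forall w1 w2, 0 <= w1 -> w1 <= w2 -> tau w1 <= tau w2)
  (hLip : forall x xt, vnorm (vsub (T x) (T xt)) <= tau (vnorm (vsub x xt)))
  (hcinf : 0 < cinf)
  (hsup : forall x, vnorm (vsub (T x) (Tt x)) <= gamma * cinf)
  (e0 : d.-tuple R) (he0 : vnorm e0 = 1)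
  (dO : measure_display) (Om : measurableType dO) (P : probability Om R)
  (Z : nat -> Om -> d.-tuple R) (U : nat -> Om -> R)
  (X Xt : nat -> Om -> d.-tuple R)
  (mX0 : measurable_fun setT (X 0%N)) (mXt0 : measurable_fun setT (Xt 0%N))
  (hZ : forall k, (0 < k)%N -> std_gaussian_vec P (Z k))
  (hU : forall k, (0 < k)%N -> uniform01 P (U k))
  (hindep : mutually_independent P (fun i : option (nat + nat) =>
     match i with
     | None => sigma_of (fun w => (X 0%N w, Xt 0%N w))
     | Some (inl k) => sigma_of (Z k.+1)
     | Some (inr k) => sigma_of (U k.+1)
     end))
  (hX : forall k w, X k.+1 w =
     vadd (T (X k w)) (vscale (Num.sqrt (sigma ^+ 2 * gamma)) (Z k.+1 w)))
  (hXt : forall k w, Xt k.+1 w =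
     let B := ind0 (pgam T Tt e0 sigma gamma (X k w) (Xt k w) (Z k.+1 w) - U k.+1 w) in
     vadd (vscale B (X k.+1 w))
          (vscale (1 - B) (Fgam T Tt e0 sigma gamma (X k w) (Xt k w) (Z k.+1 w)))) :
  (forall k : nat, {ae P, forall w,
     vnorm (vsub (X k.+1 w) (Xt k.+1 w)) <=
     Ggam sigma gamma tau cinf (vnorm (vsub (X k w) (Xt k w)))
       (vdot (edir T Tt e0 (X k w) (Xt k w)) (Z k.+1 w)) (U k.+1 w)}) /\
  (forall g u, 0 <= u <= 1 -> forall w1 w2, 0 <= w1 -> w1 <= w2 ->
     Ggam sigma gamma tau cinf w1 g u <= Ggam sigma gamma tau cinf w2 g u).
Proof.
have S_gt0 : 0 < sigma ^+ 2 * gamma by rewrite mulr_gt0 // exprn_gt0.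
split=> [k | g u /andP[_ u_le1] w1 w2 w1_ge0 w12]; rewrite /Ggam.
- have := uniform01_lt1 (hU k.+1 isT); apply: filterS => w u_lt1.
  rewrite hXt hX; cbv zeta.
  apply: le_trans (coupling_dist_le_Hgam S_gt0 he0 _ _ _ _ u_lt1) _.
  apply: (Hgam_le S_gt0); [exact: vnorm_ge0 | exact: vnorm_Ediff_le | exact: ltW].
- apply: (Hgam_le S_gt0) => //; last by rewrite lerD2r htaumono.
  by rewrite addr_ge0 ?htau0 // ltW // mulr_gt0.
Qed.
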